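(* Let $\Gamma$ be a connected signed graph on $N$ vertices. Then the flexibility $\tau(\Gamma)=N+1-c(\Gamma_+)-c(\Gamma_-)$ equals the dimension of the group of cycles of mixed type, i.e. the dimension of the real linear span of the vectors $v^\gamma=\partial(\gamma)\in\mathbb{R}^N$ as $\gamma$ ranges over the cycles of $\Gamma$ (equivalently, $\tau(\Gamma)=\dim\operatorname{im}(\partial)$).
   Context: A signed graph $\Gamma$ is a finite simple undirected graph with vertex set $\{1,\dots,N\}$ in which every edge carries a nonzero real weight, which may be of either sign. $\Gamma_+$ (resp. $\Gamma_-$) is the spanning subgraph on all vertices containing exactly the positively (resp. negatively) weighted edges; $c(H)$ is the number of connected components of $H$. For an oriented closed cycle $\gamma$ in $\Gamma$ (an element of $H_1(\Gamma)$, extended linearly), define $v^\gamma=\partial(\gamma)\in\mathbb{R}^N$ by: $v^\gamma_i$ increases by one each time $\gamma$ enters vertex $i$ through a negatively weighted edge and exits through a positively weighted edge, decreases by one each time $\gamma$ enters $i$ through a positively weighted edge and exits through a negatively weighted edge, and receives no other contributions (so $v^\gamma_i=0$ at vertices not on $\gamma$ or where $\gamma$ enters and exits through edges of the same sign). Cycles with $v^\gamma\neq 0$ are called cycles of mixed type. *)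

From HB Require Import structures.
From mathcomp Require Import all_boot all_order all_algebra.
Set Implicit Arguments. Unset Strict Implicit. Unset Printing Implicit Defensive.
Import Order.TTheory GRing.Theory Num.Theory.
Local Open Scope ring_scope.

Definition signed_graph (R : realFieldType) (N : nat)
  (adj : rel 'I_N) (w : 'I_N -> 'I_N -> R) : Prop :=
  [/\ symmetric adj, irreflexive adj,
      (forall i j, w i j = w j i) & (forall i j, adj i j -> w i j != 0)].

Definition pos_rel (R : realFieldType) (N : nat) (adj : rel 'I_N)
  (w : 'I_N -> 'I_N -> R) : rel 'I_N := fun i j => adj i j && (0 < w i j).
Definition neg_rel (R : realFieldType) (N : nat) (adj : rel 'I_N)
  (w : 'I_N -> 'I_N -> R) : rel 'I_N := fun i j => adj i j && (w i j < 0).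

Definition ncomp (N : nat) (e : rel 'I_N) : nat := n_comp e 'I_N.

Definition connected_graph (N : nat) (adj : rel 'I_N) : Prop :=
  forall i j, connect adj i j.

Definition closed_walk (N : nat) (adj : rel 'I_N) (p : seq 'I_N) : Prop :=
  p != [::] /\ cycle adj p.

(* v^gamma: at each visit of vertex j (position i in the cyclic list),
   entering through edge (x_{i-1}, x_i), exiting through (x_i, x_{i+1}):
   +1 if entering negative and exiting positive, -1 if entering positive and
   exiting negative, 0 otherwise. *)
Definition vgam (R : realFieldType) (N : nat) (w : 'I_N -> 'I_N -> R)
  (p : seq 'I_N) : 'rV[R]_N :=
  \row_j \sum_(i < size p | nth j p i == j)
     (let prv := nth j p ((i + size p).-1 %% size p) in
      let nxt := nth j p (i.+1 %% size p) in
      if (w prv j < 0) && (0 < w j nxt) then 1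
      else if (0 < w prv j) && (w j nxt < 0) then -1 else 0).

Definition is_mixed_span (R : realFieldType) (N : nat) (adj : rel 'I_N)
  (w : 'I_N -> 'I_N -> R) (U : {vspace 'rV[R]_N}) : Prop :=
  (forall p, closed_walk adj p -> vgam w p \in U) /\
  (forall W : {vspace 'rV[R]_N},
      (forall p, closed_walk adj p -> vgam w p \in W) -> (U <= W)%VS).

From HB Require Import structures.
From mathcomp Require Import all_boot all_order all_algebra.
From mathcomp Require Import zify.
Set Implicit Arguments. Unset Strict Implicit. Unset Printing Implicit Defensive.
Import Order.TTheory GRing.Theory Num.Theory.
Local Open Scope ring_scope.

(* For an edge relation e let D(e) be the span of the vectors e_u - e_v over
   the e-edges uv; then dim D(e) = N - c(e).  Along a closed walk the vectors
   e_x - e_y of all steps telescope to 0, and v^gamma is the sum of them over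
   the positive steps, hence also minus the sum over the negative ones: v^gamma
   lies in D(Gamma_+) :&: D(Gamma_-).  Conversely, fix a base vertex o and let
   Psi u be the positive flow of a walk from o to u.  Going around closed walks
   through o shows that e_u - e_v + Psi u - Psi v (uv positive) and
   Psi u - Psi v (uv negative) are combinations of v^gamma's, and these vectors
   generate the intersection.  As D(Gamma_+) + D(Gamma_-) = D(Gamma) has
   dimension N - 1, the intersection has dimension N + 1 - c_+ - c_-. *)

Local Notation "''d_' u" := (delta_mx 0 u) (at level 8, u at level 2, format "''d_' u").

Section EdgeSpace.
Variables (R : fieldType) (N : nat).
Implicit Types (e : rel 'I_N) (u v : 'I_N) (W : {vspace 'rV[R]_N}).

Definition edge_space e : {vspace 'rV[R]_N} :=
  <<[seq 'd_(p.1) - 'd_(p.2) | p <- enum [pred p : 'I_N * 'I_N | e p.1 p.2]]>>%VS.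

Lemma edge_space_edge e u v : e u v -> 'd_u - 'd_v \in edge_space e.
Proof.
by move=> huv; apply: memv_span; apply/mapP; exists (u, v); rewrite ?mem_enum.
Qed.

Lemma edge_space_mulmx e (A : 'M[R]_N) W :
  (forall u v, e u v -> ('d_u - 'd_v) *m A \in W) ->
  forall y, y \in edge_space e -> y *m A \in W.
Proof.
move=> hA y /(@coord_span _ _ _ (in_tuple _)) ->; rewrite mulmx_suml.
apply: rpred_sum => i _; rewrite -scalemxAl; apply: rpredZ.
have /mapP [[u v]] := mem_nth 0 (ltn_ord i); rewrite mem_enum => huv -> /=.
exact: hA.
Qed.

Lemma edge_space_sub e W :
  (forall u v, e u v -> 'd_u - 'd_v \in W) -> (edge_space e <= W)%VS.
Proof.
move=> hW; apply/subvP => y /(edge_space_mulmx (A := 1%:M)).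
by rewrite mulmx1; apply=> u v /hW; rewrite mulmx1.
Qed.

Lemma edge_space_connect e u v : connect e u v -> 'd_u - 'd_v \in edge_space e.
Proof.
case/connectP=> p + ->; elim: p u => [|z p IHp] u /=; first by rewrite subrr mem0v.
case/andP=> huz /IHp hz; rewrite -(subrKA 'd_z).
by apply: memvD hz; apply: edge_space_edge.
Qed.

Lemma edge_spaceU e1 e2 e :
  (forall u v, e u v = e1 u v || e2 u v) ->
  (edge_space e1 + edge_space e2)%VS = edge_space e.
Proof.
move=> eU; apply/eqP; rewrite eqEsubv subv_add -andbA.
apply/and3P; split; apply: edge_space_sub => u v huv.
- by apply: edge_space_edge; rewrite eU huv.
- by apply: edge_space_edge; rewrite eU huv orbT.
move: huv; rewrite eU => /orP [] huv.
  by apply: (subvP (addvSl _ _)); apply: edge_space_edge.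
by apply: (subvP (addvSr _ _)); apply: edge_space_edge.
Qed.

Lemma memv_span_entry0 (X : seq 'rV[R]_N) u (y : 'rV[R]_N) :
  {in X, forall x : 'rV[R]_N, x 0 u = 0} -> y \in <<X>>%VS -> y 0 u = 0.
Proof.
move=> X0 /(@coord_span _ _ _ (in_tuple X)) ->; rewrite summxE.
apply: big1 => i _.
by rewrite mxE X0 ?mulr0 // mem_nth.
Qed.

Section Roots.
Variable e : rel 'I_N.
Hypothesis e_sym : symmetric e.
Let e_csym := sym_connect_sym e_sym.

Let root_diff u : 'rV[R]_N := 'd_u - 'd_(fingraph.root e u).
Let nonroots := enum (predC (roots e)).

Lemma edge_space_root_diffs : edge_space e = <<map root_diff nonroots>>%VS.
Proof.
have root_diff_mem u : root_diff u \in <<map root_diff nonroots>>%VS.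
  have [ru | nru] := boolP (roots e u); first by rewrite /root_diff (eqP ru) subrr mem0v.
  by apply: memv_span; apply: map_f; rewrite mem_enum.
apply/eqP; rewrite eqEsubv; apply/andP; split.
  apply: edge_space_sub => u v /connect1 /(fingraph.rootP e_csym) root_uv.
  have -> : 'd_u - 'd_v = root_diff u - root_diff v.
    by rewrite /root_diff root_uv opprB addrA subrK.
  exact: memvB.
by apply/span_subvP => _ /mapP [u _ ->]; apply: edge_space_connect; exact: connect_root.
Qed.

Lemma free_root_diffs : free (map root_diff nonroots).
Proof.
have root_neq u z : ~~ roots e u -> u != fingraph.root e z.
  by move=> ru; apply: contraNneq ru => ->; exact: roots_root.
suff: forall s, uniq s -> {subset s <= predC (roots e)} -> free (map root_diff s).
  by apply; rewrite ?enum_uniq // => u; rewrite mem_enum.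
elim=> [|u s IHs] /=; first by rewrite nil_free.
case/andP=> u_s s_uniq s_nonroots; have /= ru := s_nonroots u (mem_head _ _).
rewrite free_cons (IHs s_uniq) ?andbT; last first.
  by move=> z zs; apply: s_nonroots; rewrite inE zs orbT.
apply/negP => u_span.
have : root_diff u 0 u = 0.
  apply: memv_span_entry0 u_span => _ /mapP [z zs ->].
  have uz : u != z by apply: contraNneq u_s => ->.
  by rewrite /root_diff !mxE /= (negbTE uz) (negbTE (root_neq _ z ru)) subrr.
rewrite /root_diff !mxE !eqxx (negbTE (root_neq _ u ru)) subr0.
by move/eqP; rewrite oner_eq0.
Qed.

Lemma dim_edge_space : (\dim (edge_space e) + n_comp e 'I_N)%N = N.
Proof.
rewrite edge_space_root_diffs (eqP free_root_diffs) size_map -cardE.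
rewrite -[RHS]card_ord -(cardC (roots e)) addnC; congr (_ + _)%N.
by apply: eq_card => x; rewrite !inE andbT.
Qed.

End Roots.
End EdgeSpace.

Section WalkFlow.
Variables (R : fieldType) (N : nat).
Implicit Types (e : rel 'I_N) (x : 'I_N) (t : seq 'I_N).

Fixpoint walk_flow e x t : 'rV[R]_N :=
  if t is y :: t' then (e x y)%:R *: ('d_x - 'd_y) + walk_flow e y t' else 0.

Lemma walk_flow_cat e x t1 t2 :
  walk_flow e x (t1 ++ t2) = walk_flow e x t1 + walk_flow e (last x t1) t2.
Proof. by elim: t1 x => [|y t1 IHt] x /=; rewrite ?add0r // IHt addrA. Qed.

Lemma walk_flow_edge_space e x t : walk_flow e x t \in edge_space R e.
Proof.
elim: t x => [|y t IHt] x /=; first exact: mem0v.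
apply: memvD (IHt y); have [exy | _] := boolP (e x y).
  by rewrite scale1r; apply: edge_space_edge.
by rewrite scale0r mem0v.
Qed.

Lemma walk_flow_telescope e e1 e2 x t :
  (forall u v, e u v -> e1 u v = ~~ e2 u v) -> path e x t ->
  walk_flow e1 x t + walk_flow e2 x t = 'd_x - 'd_(last x t).
Proof.
move=> e12; elim: t x => [|y t IHt] x /=; first by rewrite addr0 subrr.
case/andP=> /e12 e12xy /IHt; rewrite addrACA -scalerDl e12xy => ->.
by case: (e2 x y); rewrite ?add0r ?addr0 scale1r addrA subrK.
Qed.

Lemma walk_flow_nth e x t : walk_flow e x t =
  \sum_(k < size t) (e (nth x (x :: t) k) (nth x t k))%:R *:
                    ('d_(nth x (x :: t) k) - 'd_(nth x t k)).
Proof.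
elim: t x => [|y t IHt] x /=; first by rewrite big_ord0.
rewrite big_ord_recl IHt; congr (_ + _); apply: eq_bigr => k _ /=.
by rewrite add0n !(set_nth_default y x) //= ltnS ltnW.
Qed.

Section ClosedWalk.
Variables (x : 'I_N) (s : seq 'I_N).
Local Notation p := (x :: s).
Local Notation a k := (nth x p k).

Lemma nth_rcons_ordS (k : 'I_(size p)) :
  nth x (x :: rcons s x) k = a k /\ nth x (rcons s x) k = a (ordS k).
Proof.
rewrite -rcons_cons !nth_rcons ltn_ord /=; split=> //.
have := ltn_ord k; rewrite ltnS leq_eqVlt => /orP [/eqP -> | lt_ks].
  by rewrite ltnn eqxx modnn.
by rewrite lt_ks modn_small.
Qed.

Lemma cycle_step e (k : 'I_(size p)) : path e x (rcons s x) -> e (a k) (a (ordS k)).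
Proof.
have [<- <-] := nth_rcons_ordS k; move/pathP; apply.
by rewrite size_rcons ltn_ord.
Qed.

Lemma walk_flow_cycle e : walk_flow e x (rcons s x) =
  \sum_(k < size p) (e (a k) (a (ordS k)))%:R *: ('d_(a k) - 'd_(a (ordS k))).
Proof.
rewrite walk_flow_nth size_rcons; apply: eq_bigr => k _.
by have [-> ->] := nth_rcons_ordS k.
Qed.

End ClosedWalk.
End WalkFlow.

Lemma sign_change_ind (R : realDomainType) (u v : R) : u != 0 -> v != 0 ->
  (if (u < 0) && (0 < v) then 1 else if (0 < u) && (v < 0) then -1 else 0)
    = (0 < v)%R%:R - (0 < u)%R%:R :> R.
Proof.
case: (ltrgt0P u) => // u0 _; case: (ltrgt0P v) => // v0 _.
all: by rewrite ?subrr ?subr0 ?sub0r.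
Qed.

Section Signed.
Variables (R : realFieldType) (N : nat) (adj : rel 'I_N) (w : 'I_N -> 'I_N -> R).
Hypothesis w_neq0 : forall u v, adj u v -> w u v != 0.
Local Notation pos := (pos_rel adj w).
Local Notation neg := (neg_rel adj w).

(* A visit of j contributes [leaving step positive] - [entering step positive]
   to v^gamma; shifting the index of the entering steps gives the flow. *)
Lemma vgam_walk_flow x s : path adj x (rcons s x) ->
  vgam w (x :: s) = walk_flow R pos x (rcons s x).
Proof.
move=> cyc; rewrite walk_flow_cycle.
set p := x :: s; set n := size p; pose a (k : 'I_n) := nth x p k.
have nth_a (k : 'I_n) y : nth y p k = a k by apply: set_nth_default.
pose c (k : 'I_n) : R := (0 < w (a k) (a (ordS k)))%R%:R.
apply/rowP => j; rewrite !mxE summxE big_mkcond /=.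
transitivity (\sum_(k < n) ((a k == j)%:R * c k - (a (ordS k) == j)%:R * c k)).
  rewrite sumrB [X in _ - X](reindex_inj (@ord_pred_inj n)) -sumrB /=.
  apply: eq_bigr => k _.
  rewrite ord_predK nth_a (nth_a (ord_pred k)) (nth_a (ordS k)).
  case: eqP => [<- | _]; last by rewrite !mulr0n !mul0r subrr.
  rewrite !mulr1n !mul1r /c ord_predK sign_change_ind ?w_neq0 ?cycle_step //.
  by have := cycle_step (ord_pred k) cyc; rewrite ord_predK.
apply: eq_bigr => k _; rewrite !mxE /pos_rel cycle_step //= !(eq_sym j).
by rewrite mulrBr mulrC [X in _ - X]mulrC.
Qed.

End Signed.

Section MixedSpace.
Variables (R : realFieldType) (N : nat) (adj : rel 'I_N) (w : 'I_N -> 'I_N -> R).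
Hypothesis w_neq0 : forall u v, adj u v -> w u v != 0.
Local Notation pos := (pos_rel adj w).
Local Notation neg := (neg_rel adj w).

Definition mixed_space : {vspace 'rV[R]_N} :=
  (edge_space R pos :&: edge_space R neg)%VS.

Lemma pos_rel_neg u v : adj u v -> pos u v = ~~ neg u v.
Proof.
by rewrite /pos_rel /neg_rel => uv; move: (w_neq0 uv); rewrite uv; case: ltrgt0P.
Qed.

Lemma pos_rel_or_neg u v : adj u v = pos u v || neg u v.
Proof.
rewrite /pos_rel /neg_rel; have [uv|] //= := boolP (adj u v).
by move: (w_neq0 uv); case: ltrgt0P.
Qed.

Lemma vgam_mixed p : closed_walk adj p -> vgam w p \in mixed_space.
Proof.
case: p => [|x s] [// _ cyc]; rewrite (vgam_walk_flow w_neq0 cyc).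
rewrite memv_cap walk_flow_edge_space /=.
have := walk_flow_telescope R pos_rel_neg cyc.
rewrite last_rcons subrr => /eqP; rewrite addr_eq0 => /eqP ->.
by rewrite rpredN walk_flow_edge_space.
Qed.

Section Minimality.
Variables (W : {vspace 'rV[R]_N}) (o : 'I_N).
Hypothesis vgamW : forall p, closed_walk adj p -> vgam w p \in W.
Hypothesis adj_conn : connected_graph adj.

Lemma closed_walk_flow t : path adj o t -> last o t = o -> walk_flow R pos o t \in W.
Proof.
case/lastP: t => [|s z]; first by rewrite mem0v.
rewrite last_rcons => + z_o; rewrite z_o => cyc.
by rewrite -(vgam_walk_flow w_neq0 cyc); apply: vgamW.
Qed.

(* The vector below is the difference of the flows around the closed walks
   o ~> u -> v ~> o and o ~> v ~> o. *)
Lemma flow_potential : exists Psi : 'I_N -> 'rV[R]_N,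
  forall u v, adj u v -> Psi u - Psi v + (pos u v)%:R *: ('d_u - 'd_v) \in W.
Proof.
have walk_from u : exists t, path adj o t && (last o t == u).
  by have /connectP [t ot ->] := adj_conn o u; exists t; rewrite ot eqxx.
have walk_to u : exists t, path adj u t && (last u t == o).
  by have /connectP [t ut ->] := adj_conn u o; exists t; rewrite ut eqxx.
pose from u := xchoose (walk_from u); pose to u := xchoose (walk_to u).
exists (fun u => walk_flow R pos o (from u)) => u v uv.
have /andP [ou /eqP ou_last] := xchooseP (walk_from u).
have /andP [ov /eqP ov_last] := xchooseP (walk_from v).
have /andP [vo /eqP vo_last] := xchooseP (walk_to v).
have round_v : walk_flow R pos o (from v ++ to v) \in W.
  by apply: closed_walk_flow; rewrite ?cat_path ?last_cat ov_last ?ov.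
have round_uv : walk_flow R pos o (from u ++ v :: to v) \in W.
  by apply: closed_walk_flow; rewrite ?cat_path ?last_cat ou_last /= ?ou ?uv.
have := memvB round_uv round_v.
by rewrite !walk_flow_cat ou_last ov_last /= opprD addrACA addrK.
Qed.

Lemma mixed_space_sub : (mixed_space <= W)%VS.
Proof.
have [Psi Psi_edge] := flow_potential.
pose M := \matrix_u Psi u.
have dM u : 'd_u *m M = Psi u by rewrite -rowE rowK.
apply/subvP => y; rewrite memv_cap => /andP [y_pos y_neg].
have -> : y = y *m (1%:M + M) - y *m M by rewrite mulmxDr mulmx1 addrK.
apply: memvB.
  apply: edge_space_mulmx y_pos => u v /andP [uv w_pos].
  have := Psi_edge u v uv; rewrite /pos_rel uv w_pos scale1r.
  by rewrite mulmxDr mulmx1 mulmxBl !dM addrC.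
apply: edge_space_mulmx y_neg => u v /andP [uv w_neg].
have := Psi_edge u v uv; rewrite /pos_rel uv ltNge (ltW w_neg) scale0r addr0.
by rewrite mulmxBl !dM.
Qed.

End Minimality.

Hypotheses (adj_sym : symmetric adj) (w_sym : forall u v, w u v = w v u).
Hypothesis adj_conn : connected_graph adj.
Hypothesis N_gt0 : (0 < N)%N.

Lemma dim_mixed_space :
  (\dim mixed_space + ncomp pos + ncomp neg)%N = N.+1.
Proof.
have pos_sym : symmetric pos by move=> u v; rewrite /pos_rel adj_sym w_sym.
have neg_sym : symmetric neg by move=> u v; rewrite /neg_rel adj_sym w_sym.
have adj_comp1 : n_comp adj 'I_N = 1%N.
  rewrite -(n_comp_connect (sym_connect_sym adj_sym) (Ordinal N_gt0)).
  by apply: eq_n_comp_r => x; rewrite !inE adj_conn.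
have := dimv_sum_cap (edge_space R pos) (edge_space R neg).
rewrite (edge_spaceU R pos_rel_or_neg) /mixed_space /ncomp.
have := dim_edge_space R adj_sym; have := dim_edge_space R pos_sym.
have := dim_edge_space R neg_sym; rewrite adj_comp1.
(* [lia] does not take [\dim] terms as atoms. *)
move: (\dim _) (\dim _) (\dim _) (\dim _); lia.
Qed.
End MixedSpace.

Theorem mainTheorem7 (R : realFieldType) (N : nat) (adj : rel 'I_N)
  (w : 'I_N -> 'I_N -> R) :
  (0 < N)%N -> signed_graph adj w -> connected_graph adj ->
  exists U : {vspace 'rV[R]_N},
    is_mixed_span adj w U /\
    (N%:Z + 1 - (ncomp (pos_rel adj w))%:Z - (ncomp (neg_rel adj w))%:Z
       = (\dim U)%:Z)%R.
Proof.
move=> N_gt0 [adj_sym _ w_sym w_neq0] adj_conn.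
exists (mixed_space adj w); split; first split.
- exact: vgam_mixed.
- move=> W vgamW; exact: (mixed_space_sub w_neq0 (Ordinal N_gt0) vgamW adj_conn).
have := dim_mixed_space w_neq0 adj_sym w_sym adj_conn N_gt0; lia.
Qed.
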